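(* Let $f=f(x_1,\ldots,x_n)$ be a positive non-canalyzing Boolean function such that for every $i\in[n]$ both restrictions $f_{|x_i=0}$ and $f_{|x_i=1}$ are canalyzing. Then for each $i\in[n]$: (a) there is a maximal zero of $f$ having $0$'s in exactly two coordinates, one of which is $i$; (b) there is a minimal one of $f$ having $1$'s in exactly two coordinates, one of which is $i$.
   Context: $B=\{0,1\}$, $\preceq$ the coordinatewise order on $B^n$. $f$ is positive if $f(\mathbf{x})=1$ and $\mathbf{x}\preceq\mathbf{y}$ imply $f(\mathbf{y})=1$. Maximal zeros are $\preceq$-maximal false points, minimal ones are $\preceq$-minimal true points. $f_{|x_i=\alpha}$ is obtained by fixing $x_i=\alpha$. $f$ is canalyzing if for some $i$, $f_{|x_i=0}$ or $f_{|x_i=1}$ is constant. *)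

From mathcomp Require Import all_boot.
Set Implicit Arguments. Unset Strict Implicit. Unset Printing Implicit Defensive.

Definition point (n : nat) := {ffun 'I_n -> bool}.
Definition boolfun (n : nat) := point n -> bool.

Definition ple n (x y : point n) : bool := [forall k, x k ==> y k].

Definition positive n (f : boolfun n) : Prop :=
  forall x y : point n, f x -> ple x y -> f y.

Definition max_zero n (f : boolfun n) (x : point n) : Prop :=
  f x = false /\ forall y : point n, ple x y -> f y = false -> y = x.

Definition min_one n (f : boolfun n) (x : point n) : Prop :=
  f x = true /\ forall y : point n, ple y x -> f y = true -> y = x.

Definition canalyzing n (f : boolfun n) : Prop :=
  exists (i : 'I_n) (a : bool),
    forall x y : point n, x i = a -> y i = a -> f x = f y.

(* The restriction f_{|x_i=a}, a function of the n-1 remaining variables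
   (x_j, j <> i), is canalyzing: for some j <> i and value b, fixing x_j = b in
   the restriction yields a constant function. *)
Definition restr_canalyzing n (f : boolfun n) (i : 'I_n) (a : bool) : Prop :=
  exists (j : 'I_n) (b : bool), j != i /\
    forall x y : point n, x i = a -> y i = a -> x j = b -> y j = b -> f x = f y.

(* Since f is positive and not canalyzing, every unit vector e_k is a zero and
   every complement of one, ~e_k, is a one (otherwise x_k = 1, resp. x_k = 0,
   would canalyze f). If f_{|x_i=0} is made constant by x_j = b, then b = 0:
   e_j and ~e_i both satisfy x_i = 0, x_j = 1 yet differ in value. So the point
   with zeros exactly at i and j has the value f(0) = 0, and it is a maximal
   zero because raising either zero puts it above ~e_j or ~e_i.
   Part (b) is part (a) for the dual function x |-> ~ f(~ x). *)

From mathcomp Require Import all_boot.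

Set Implicit Arguments.
Unset Strict Implicit.

Section Points.
Variable n : nat.
Implicit Types (x y : point n) (i j k : 'I_n).

Lemma pleP x y : reflect (forall k, x k -> y k) (ple x y).
Proof. by apply: (iffP forallP) => H k; [apply/implyP | apply/implyP/H]. Qed.

Definition unitv k : point n := [ffun m => m == k].
Definition cunitv k : point n := [ffun m => m != k].
Definition zeros2 i j : point n := [ffun m => (m != i) && (m != j)].
Definition compl x : point n := [ffun k => ~~ x k].

Lemma complK : involutive compl.
Proof. by move=> x; apply/ffunP => k; rewrite !ffunE negbK. Qed.

Lemma ple_compl x y : ple (compl x) (compl y) = ple y x.
Proof.
apply/idP/idP => /pleP H; apply/pleP => k; last by rewrite !ffunE; apply: contra (H k).
by have := H k; rewrite !ffunE => /contraLR.
Qed.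

Lemma zeros2C i j : zeros2 i j = zeros2 j i.
Proof. by apply/ffunP => m; rewrite !ffunE andbC. Qed.

Lemma zeros2_ple_cunitv i j y : ple (zeros2 i j) y -> y i -> ple (cunitv j) y.
Proof.
move=> /pleP le_zy yi; apply/pleP => m; rewrite ffunE => mj.
by case: (eqVneq m i) => [-> //|mi]; apply: le_zy; rewrite ffunE mi mj.
Qed.

Lemma zeros2_ple_eq i j y :
  ple (zeros2 i j) y -> ~~ y i -> ~~ y j -> y = zeros2 i j.
Proof.
move=> /pleP le_zy /negbTE yi /negbTE yj; apply/ffunP => m; rewrite ffunE.
case: (eqVneq m i) => [-> //|mi]; case: (eqVneq m j) => [-> //|mj].
by apply: le_zy; rewrite ffunE mi mj.
Qed.

Lemma card_zeros2 i j : i != j -> #|[set k | ~~ zeros2 i j k]| = 2.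
Proof.
move=> ij; have -> : [set k | ~~ zeros2 i j k] = [set i; j].
  by apply/setP => m; rewrite !inE ffunE negb_and !negbK.
by rewrite cards2 ij.
Qed.

End Points.

Section PositiveNonCanalyzing.
Variables (n : nat) (f : boolfun n).
Hypotheses (f_pos : positive f) (f_noncan : ~ canalyzing f).
Implicit Types (i j k : 'I_n).

Lemma f_unitv k : f (unitv k) = false.
Proof.
case fk: (f (unitv k)) => //; case: f_noncan; exists k, true => x y xk yk.
suff f_true (z : point n) : z k = true -> f z = true by rewrite !f_true.
move=> zk; apply: f_pos fk _; apply/pleP => m; rewrite ffunE => /eqP ->.
by rewrite zk.
Qed.

Lemma f_cunitv k : f (cunitv k) = true.
Proof.
case fk: (f (cunitv k)) => //; case: f_noncan; exists k, false => x y xk yk.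
suff f_false (z : point n) : z k = false -> f z = false by rewrite !f_false.
move=> zk; apply: contraFF fk => fz; apply: f_pos fz _.
by apply/pleP => m zm; rewrite ffunE; apply: contraTneq zm => ->; rewrite zk.
Qed.

Lemma restr_canalyzing0_zeros2 i :
  restr_canalyzing f i false -> exists2 j, i != j & f (zeros2 i j) = false.
Proof.
case=> j [[] [ji f_const]].
  suff : f (unitv j) = f (cunitv i) by rewrite f_unitv f_cunitv.
  by apply: f_const; rewrite !ffunE ?eqxx // eq_sym (negbTE ji).
exists j; first by rewrite eq_sym.
have f_zero : f [ffun=> false] = false.
  apply: contraFF (f_unitv i) => f0; apply: f_pos f0 _.
  by apply/pleP => m; rewrite ffunE.
by rewrite -f_zero; apply: f_const; rewrite !ffunE ?eqxx ?andbF.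
Qed.

Lemma max_zero_zeros2 i j : f (zeros2 i j) = false -> max_zero f (zeros2 i j).
Proof.
move=> fz; split=> // y le_zy fy.
have zero_at a b : ple (zeros2 a b) y -> ~~ y a.
  move=> le_aby; apply: contraFN fy => ya.
  exact: f_pos (f_cunitv b) (zeros2_ple_cunitv le_aby ya).
apply: zeros2_ple_eq => //; first exact: zero_at le_zy.
by apply: (zero_at j i); rewrite -zeros2C.
Qed.

Lemma exists_max_zero_two_zeros i :
  restr_canalyzing f i false ->
  exists x : point n, max_zero f x /\ x i = false /\ #|[set k | ~~ x k]| = 2.
Proof.
case/restr_canalyzing0_zeros2 => j ij fz; exists (zeros2 i j).
by split; [exact: max_zero_zeros2 | rewrite card_zeros2 // ffunE eqxx].
Qed.

End PositiveNonCanalyzing.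

Section Duality.
Variables (n : nat) (f : boolfun n).

Definition dual : boolfun n := fun x => ~~ f (compl x).

Lemma positive_dual : positive f -> positive dual.
Proof.
move=> f_pos x y fx le_xy; apply: contraNN fx => fy.
by apply: f_pos fy _; rewrite ple_compl.
Qed.

Lemma canalyzing_dual : canalyzing dual -> canalyzing f.
Proof.
case=> i [a f_const]; exists i, (~~ a) => x y xi yi.
rewrite -[x]complK -[y]complK; apply/negb_inj.
by apply: f_const; rewrite ffunE ?xi ?yi negbK.
Qed.

Lemma restr_canalyzing_dual i :
  restr_canalyzing f i true -> restr_canalyzing dual i false.
Proof.
case=> j [b [ji f_const]]; exists j, (~~ b); split=> // x y xi yi xj yj.
by rewrite /dual; congr negb; apply: f_const; rewrite ffunE ?xi ?yi ?xj ?yj ?negbK.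
Qed.

Lemma max_zero_dual x : max_zero dual x -> min_one f (compl x).
Proof.
case=> /negbFE fx x_max; split=> // y le_yx fy.
rewrite -[y]complK; congr compl; apply: x_max.
  by rewrite -ple_compl complK.
by rewrite /dual complK fy.
Qed.

End Duality.

Theorem mainTheorem5 (n : nat) (f : boolfun n) :
  positive f -> ~ canalyzing f ->
  (forall i : 'I_n, restr_canalyzing f i false /\ restr_canalyzing f i true) ->
  forall i : 'I_n,
    (exists x : point n, max_zero f x /\ x i = false /\
        #|[set k | ~~ x k]| = 2) /\
    (exists x : point n, min_one f x /\ x i = true /\
        #|[set k | x k]| = 2).
Proof.
move=> f_pos f_noncan f_restr i; have [f_restr0 f_restr1] := f_restr i.
split; first exact: exists_max_zero_two_zeros.
have dual_noncan : ~ canalyzing (dual f) by move/canalyzing_dual.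
have [x [x_max [xi x_card]]] := exists_max_zero_two_zeros
  (positive_dual f_pos) dual_noncan (restr_canalyzing_dual f_restr1).
exists (compl x); split; first exact: max_zero_dual.
split; first by rewrite ffunE xi.
by rewrite -x_card; apply: eq_card => k; rewrite !inE ffunE.
Qed.
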